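(* Let $G$ be a Lie group, $H\subseteq G$ a closed subgroup, and $\mathfrak{g}=\mathfrak{h}\oplus\mathfrak{m}$ a reductive decomposition. Equip $G/H$ with a $G$-invariant Riemannian metric (an $\mathrm{Ad}(H)$-invariant inner product $\langle\cdot,\cdot\rangle$ on $\mathfrak{m}$) with Levi-Civita connection $\nabla$. If $G/H$ admits a $G$-invariant Codazzi tensor field $A$ with $\nabla A\neq 0$, then the difference sectional curvature $K^d$ takes both positive and negative values, i.e. there are $2$-planes $\Pi,\Pi'\subseteq\mathfrak{m}$ with $K^d(\Pi)>0$ and $K^d(\Pi')<0$.
   Context: A reductive decomposition means $\mathfrak{m}$ is an $\mathrm{Ad}(H)$-invariant vector space complement of $\mathfrak{h}$ in $\mathfrak{g}$; $[X,Y]_{\mathfrak{m}}$ and $[X,Y]_{\mathfrak{h}}$ are the components of $[X,Y]$ in $\mathfrak{g}=\mathfrak{h}\oplus\mathfrak{m}$, and $\mathfrak{m}\cong T_{eH}(G/H)$. $G$-invariant tensor fields correspond to $\mathrm{Ad}(H)$-invariant tensors on $\mathfrak{m}$. A Codazzi tensor field is a symmetric twice-covariant tensor field $A$ with $(\nabla_XA)(Y,Z)=(\nabla_YA)(X,Z)$ for all vector fields. The Levi-Civita product $\alpha:\mathfrak{m}\times\mathfrak{m}\to\mathfrak{m}$ is defined by $2\langle\alpha(X,Y),Z\rangle=\langle[X,Y]_{\mathfrak{m}},Z\rangle-\langle X,[Y,Z]_{\mathfrak{m}}\rangle-\langle[X,Z]_{\mathfrak{m}},Y\rangle$. The Riemann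 curvature of the metric at $eH$ is $R(X,Y)Z=\alpha(X,\alpha(Y,Z))-\alpha(Y,\alpha(X,Z))-\alpha([X,Y]_{\mathfrak{m}},Z)-[[X,Y]_{\mathfrak{h}},Z]$, and the curvature of the canonical connection of the second kind $\nabla^0$ (the $G$-invariant connection corresponding to the zero product on $\mathfrak{m}$) is $R^0(X,Y)Z=-[[X,Y]_{\mathfrak{h}},Z]$, for $X,Y,Z\in\mathfrak{m}$. The difference curvature tensor is $R^d=R-R^0$, i.e. $R^d(X,Y)Z=\alpha(X,\alpha(Y,Z))-\alpha(Y,\alpha(X,Z))-\alpha([X,Y]_{\mathfrak{m}},Z)$. For a $2$-plane $\Pi\subseteq\mathfrak{m}$ with orthonormal basis $\{X,Y\}$, $K^d(\Pi)=\langle R^d(X,Y)Y,X\rangle=K(\Pi)-K^0(\Pi)$, where $K$ is the sectional curvature of the metric and $K^0(\Pi)=\langle R^0(X,Y)Y,X\rangle$ (independent of the orthonormal basis). *)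

(* Algebraic (infinitesimal) model of a reductive
   homogeneous space G/H: everything is expressed at the origin eH through
   the reductive decomposition g = h (+) m, as in the paper's setting. *)
From HB Require Import structures.
From mathcomp Require Import all_boot all_order all_algebra.
From mathcomp Require Import reals.

Set Implicit Arguments.
Unset Strict Implicit.
Unset Printing Implicit Defensive.

Import Order.TTheory GRing.Theory Num.Theory.
Local Open Scope ring_scope.

Section HomogeneousDefs.
Variables (R : realType) (g : vectType R).

Definition lie_bracket (br : g -> g -> g) : Prop :=
  [/\ (forall a x y z, br (a *: x + y) z = a *: br x z + br y z),
      (forall a x y z, br z (a *: x + y) = a *: br z x + br z y),
      (forall x, br x x = 0) &
      (forall x y z, br x (br y z) + br y (br z x) + br z (br x y) = 0)].

(* ---------- the decomposition g = h (+) m, given by the projection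
   ph : g -> g onto h along m ---------- *)
Definition in_h (ph : g -> g) (x : g) : Prop := ph x = x.
Definition in_m (ph : g -> g) (x : g) : Prop := ph x = 0.
Definition mpart (ph : g -> g) (x : g) : g := x - ph x.

Definition reductive_decomposition (br : g -> g -> g) (ph : g -> g) : Prop :=
  [/\ (forall a x y, ph (a *: x + y) = a *: ph x + ph y),
      (forall x, ph (ph x) = ph x),
      (forall U V, in_h ph U -> in_h ph V -> in_h ph (br U V)) &
      (forall U X, in_h ph U -> in_m ph X -> in_m ph (br U X))].

Definition bilinear_on_m (ph : g -> g) (B : g -> g -> R) : Prop :=
  forall a x y z, in_m ph x -> in_m ph y -> in_m ph z ->
    B (a *: x + y) z = a * B x z + B y z /\ B z (a *: x + y) = a * B z x + B z y.

Definition symmetric_on_m (ph : g -> g) (B : g -> g -> R) : Prop :=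
  forall x y, in_m ph x -> in_m ph y -> B x y = B y x.

Definition adh_invariant (br : g -> g -> g) (ph : g -> g) (B : g -> g -> R) : Prop :=
  forall U x y, in_h ph U -> in_m ph x -> in_m ph y ->
    B (br U x) y + B x (br U y) = 0.

(* G-invariant Riemannian metric = ad(h)-invariant inner product on m *)
Definition invariant_inner_product br ph (ip : g -> g -> R) : Prop :=
  [/\ bilinear_on_m ph ip, symmetric_on_m ph ip,
      (forall x, in_m ph x -> x != 0 -> 0 < ip x x) &
      adh_invariant br ph ip].

Definition levi_civita_product br ph (ip : g -> g -> R) (alpha : g -> g -> g) : Prop :=
  (forall X Y, in_m ph X -> in_m ph Y -> in_m ph (alpha X Y)) /\
  (forall X Y Z, in_m ph X -> in_m ph Y -> in_m ph Z ->
     2 * ip (alpha X Y) Z =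
       ip (mpart ph (br X Y)) Z - ip X (mpart ph (br Y Z))
       - ip (mpart ph (br X Z)) Y).

(* Covariant derivative at eH of a G-invariant (0,2)-tensor A for the
   invariant connection with Nomizu product alpha:
   (nabla_X A)(Y,Z) = - A(alpha(X,Y),Z) - A(Y,alpha(X,Z)). *)
Definition nablaA (alpha : g -> g -> g) (A : g -> g -> R) (X Y Z : g) : R :=
  - A (alpha X Y) Z - A Y (alpha X Z).

Definition invariant_codazzi br ph alpha (A : g -> g -> R) : Prop :=
  [/\ bilinear_on_m ph A, symmetric_on_m ph A, adh_invariant br ph A &
      (forall X Y Z, in_m ph X -> in_m ph Y -> in_m ph Z ->
         nablaA alpha A X Y Z = nablaA alpha A Y X Z)].

Definition nablaA_nonzero ph alpha (A : g -> g -> R) : Prop :=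
  exists X Y Z, [/\ in_m ph X, in_m ph Y, in_m ph Z & nablaA alpha A X Y Z != 0].

Definition Rd br ph (alpha : g -> g -> g) (X Y Z : g) : g :=
  alpha X (alpha Y Z) - alpha Y (alpha X Z) - alpha (mpart ph (br X Y)) Z.

Definition Kd br ph (ip : g -> g -> R) alpha (X Y : g) : R :=
  ip (Rd br ph alpha X Y Y) X.

Definition orthonormal_pair ph (ip : g -> g -> R) (X Y : g) : Prop :=
  [/\ in_m ph X, in_m ph Y, ip X X = 1, ip Y Y = 1 & ip X Y = 0].

End HomogeneousDefs.

(* Diagonalise A with respect to the metric: m has an orthonormal basis (e_i) with
   A(e_i, .) = c_i <e_i, .>, obtained by maximising Rayleigh quotients.  The Codazzi
   equation makes t_ijl = (nabla_{e_i} A)(e_j, e_l) totally symmetric, and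
   t_ijl = (c_j - c_l) <alpha(e_i, e_j), e_l>, so t_ijl = 0 unless c_i, c_j, c_l are
   pairwise distinct.  For c_i <> c_j this gives
     K^d(e_i, e_j) = 2 <alpha(e_i, e_j), alpha(e_j, e_i)>
                   = 2 sum_l t_ijl^2 / ((c_i - c_l) (c_j - c_l)).
   As nabla A <> 0 some t_ijl is nonzero; fix i with c_i minimal among all indices
   of nonzero t's.  Among the j with some t_ijl <> 0, the one with smallest c_j
   makes every nonzero term of the sum positive, the one with largest c_j makes
   every nonzero term negative. *)

From Pilot Require Import Defs.
From HB Require Import structures.
From mathcomp Require Import all_boot all_order all_algebra.
From mathcomp Require Import reals classical_sets boolp topology normedtype derive.
From mathcomp Require Import ring lra.
Import Order.TTheory GRing.Theory Num.Theory numFieldNormedType.Exports.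
Import VectorInternalTheory.
Local Open Scope classical_set_scope.
Local Open Scope ring_scope.

Set Implicit Arguments.
Unset Strict Implicit.
Unset Printing Implicit Defensive.

(** * Symmetric bilinear forms on a linear subset *)

Section FormOn.
Variables (R : comPzRingType) (V : lmodType R).

Definition linear_subset (S : set V) :=
  S 0 /\ forall a x y, S x -> S y -> S (a *: x + y).

Definition symmetric_bilinear_on (S : set V) (B : V -> V -> R) :=
  (forall a x y z, S x -> S y -> S z -> B (a *: x + y) z = a * B x z + B y z) /\
  (forall x y, S x -> S y -> B x y = B y x).

Variables (S : set V) (B : V -> V -> R).
Hypotheses (hS : linear_subset S) (hB : symmetric_bilinear_on S B).

Lemma linear_subset0 : S 0. Proof. by case: hS. Qed.

Lemma linear_subsetD x y : S x -> S y -> S (x + y).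
Proof. by case: hS => _ lin Sx Sy; have := lin 1 _ _ Sx Sy; rewrite scale1r. Qed.

Lemma linear_subsetZ a x : S x -> S (a *: x).
Proof. by case: hS => S0 lin Sx; rewrite -[_ *: _]addr0; apply: lin. Qed.

Lemma linear_subsetN x : S x -> S (- x).
Proof. by move=> Sx; rewrite -scaleN1r; apply: linear_subsetZ. Qed.

Lemma linear_subsetB x y : S x -> S y -> S (x - y).
Proof. by move=> Sx Sy; apply: linear_subsetD => //; apply: linear_subsetN. Qed.

Lemma linear_subset_sum (I : Type) (r : seq I) (a : I -> R) (v : I -> V) :
  (forall i, S (v i)) -> S (\sum_(i <- r) a i *: v i).
Proof.
move=> Sv; elim/big_ind: _ => //; [exact: linear_subset0 | exact: linear_subsetD |].
by move=> i _; apply: linear_subsetZ.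
Qed.

Lemma form_sym x y : S x -> S y -> B x y = B y x.
Proof. by case: hB => _; apply. Qed.

Lemma form_linl a x y z : S x -> S y -> S z ->
  B (a *: x + y) z = a * B x z + B y z.
Proof. by case: hB => lin _; apply: lin. Qed.

Lemma form_linr a x y z : S x -> S y -> S z ->
  B z (a *: x + y) = a * B z x + B z y.
Proof.
move=> Sx Sy Sz; rewrite form_sym ?form_linl ?(form_sym Sz) //.
by case: hS => _; apply.
Qed.

Lemma form0l z : S z -> B 0 z = 0.
Proof.
move=> Sz; have := form_linl 1 linear_subset0 linear_subset0 Sz.
rewrite scale1r addr0 mul1r => h.
by apply: (addrI (B 0 z)); rewrite -h addr0.
Qed.

Lemma formDl x y z : S x -> S y -> S z -> B (x + y) z = B x z + B y z.
Proof. by move=> Sx Sy Sz; have := form_linl 1 Sx Sy Sz; rewrite scale1r mul1r. Qed.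

Lemma formZl a x z : S x -> S z -> B (a *: x) z = a * B x z.
Proof.
by move=> Sx Sz; rewrite -[_ *: _]addr0 form_linl ?form0l ?addr0 //; exact: linear_subset0.
Qed.

Lemma formZr a x z : S x -> S z -> B z (a *: x) = a * B z x.
Proof.
by move=> Sx Sz; rewrite form_sym ?formZl ?(form_sym Sx) //; exact: linear_subsetZ.
Qed.

Lemma formNl x z : S x -> S z -> B (- x) z = - B x z.
Proof. by move=> Sx Sz; rewrite -scaleN1r formZl // mulN1r. Qed.

Lemma formNr x z : S x -> S z -> B z (- x) = - B z x.
Proof. by move=> Sx Sz; rewrite -scaleN1r formZr // mulN1r. Qed.

Lemma formBl x y z : S x -> S y -> S z -> B (x - y) z = B x z - B y z.
Proof. by move=> Sx Sy Sz; rewrite formDl ?formNl //; exact: linear_subsetN. Qed.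

Lemma formBr x y z : S x -> S y -> S z -> B z (x - y) = B z x - B z y.
Proof.
by move=> Sx Sy Sz; rewrite form_sym ?formBl ?(form_sym Sz) ?(form_sym Sz Sy) //;
  exact: linear_subsetB.
Qed.

Lemma form_suml (I : Type) (r : seq I) (a : I -> R) (v : I -> V) z :
  (forall i, S (v i)) -> S z ->
  B (\sum_(i <- r) a i *: v i) z = \sum_(i <- r) a i * B (v i) z.
Proof.
move=> Sv Sz; elim: r => [|i r IH]; first by rewrite !big_nil form0l.
by rewrite !big_cons form_linl ?IH //; exact: linear_subset_sum.
Qed.

Lemma form_sumr (I : Type) (r : seq I) (a : I -> R) (v : I -> V) z :
  (forall i, S (v i)) -> S z ->
  B z (\sum_(i <- r) a i *: v i) = \sum_(i <- r) a i * B z (v i).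
Proof.
move=> Sv Sz; rewrite form_sym ?form_suml //; last exact: linear_subset_sum.
by apply: eq_bigr => i _; rewrite form_sym.
Qed.

End FormOn.

Lemma linear_subsetT (R : comPzRingType) (V : lmodType R) : linear_subset [set: V].
Proof. by []. Qed.

Lemma lin_coef_eq0_of_quadratic_le0 (R : realFieldType) (a b : R) :
  (forall t, t * a + t ^+ 2 * b <= 0) -> a = 0.
Proof.
move=> H; set c := `|b| + 1.
have c_gt0 : 0 < c by rewrite /c ltr_pwDr ?normr_ge0.
have cb_ge1 : 1 <= c + b by have := ler_norm (- b); rewrite normrN /c; lra.
pose t := a / c; have a_tc : a = t * c by rewrite /t divfK // lt0r_neq0.
have : t ^+ 2 * (c + b) <= 0.
  by rewrite (_ : _ * _ = t * a + t ^+ 2 * b) ?H // a_tc; ring.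
move=> H2; have t0 : t = 0 by nra.
by rewrite a_tc t0 mul0r.
Qed.

Lemma continuous_sum (T : topologicalType) (R : realType) (I : Type) (r : seq I)
    (F : I -> T -> R) :
  (forall i, continuous (F i)) -> continuous (fun x => \sum_(i <- r) F i x).
Proof.
move=> HF; elim: r => [|i r IH].
  by under eq_fun do rewrite big_nil; exact: cst_continuous.
under eq_fun do rewrite big_cons.
by move=> x; apply: continuousD; [exact: HF | exact: IH].
Qed.

(** * Rayleigh quotients and the spectral theorem *)

Section Rayleigh.
Variables (R : realType) (V : vectType R) (P Q : V -> V -> R).
Hypotheses (hP : symmetric_bilinear_on setT P) (hQ : symmetric_bilinear_on setT Q).
Hypothesis P_pos : forall v, v != 0 -> 0 < P v v.
Let hT := linear_subsetT V.

Lemma quadratic_r2v_continuous B : symmetric_bilinear_on setT B ->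
  continuous (fun x : 'rV[R]_(dim V) => B (r2v x) (r2v x)).
Proof.
move=> hB.
have r2vE x : r2v x = \sum_i x 0 i *: r2v 'e_i.
  by rewrite {1}(row_sum_delta x) linear_sum; apply: eq_bigr => i _; rewrite linearZ.
under eq_fun => x do rewrite r2vE (form_suml hT hB) //.
apply: continuous_sum => i; under eq_fun => x do rewrite (form_sumr hT hB) //.
move=> x; apply: continuousM; first exact: coord_continuous.
apply: continuous_sum => j {}x.
by apply: continuousM; [exact: coord_continuous | exact: cst_continuous].
Qed.

Lemma rayleigh_max : (exists w : V, w != 0) ->
  exists2 v0, v0 != 0 & forall v, Q v v * P v0 v0 <= Q v0 v0 * P v v.
Proof.
move=> [w w_neq0].
pose sq (x : 'rV[R]_(dim V)) := \sum_i x 0 i ^+ 2.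
pose S := [set x | sq x = 1].
have sq_gt0 x : x != 0 -> 0 < sq x.
  move=> x_neq0; rewrite lt_def sumr_ge0 ?andbT => [|i _]; last exact: sqr_ge0.
  apply: contra x_neq0 => /eqP /psumr_eq0P sq0; apply/eqP/rowP => i.
  by rewrite mxE; apply/eqP; rewrite -sqrf_eq0 sq0 // => j _; exact: sqr_ge0.
have r2v_neq0 (x : 'rV[R]_(dim V)) : x != 0 -> r2v x != 0.
  by apply: contra => /eqP x0; apply/eqP/r2v_inj; rewrite x0 linear0.
have S_neq0 x : S x -> x != 0.
  rewrite /S /= => sx1; apply/eqP => x0; move: sx1; rewrite x0 /sq big1 => [/eqP|i _].
    by rewrite eq_sym oner_eq0.
  by rewrite mxE expr0n.
have normalizeS (x : 'rV[R]_(dim V)) : x != 0 -> S ((Num.sqrt (sq x))^-1 *: x).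
  move=> x_neq0; rewrite /S /= /sq; under eq_bigr do rewrite mxE exprMn.
  by rewrite -mulr_sumr exprVn sqr_sqrtr ?mulVf ?lt0r_neq0 ?ltW ?sq_gt0.
have S_compact : compact S.
  have sq_cont : continuous sq.
    by apply: continuous_sum => i x; apply: continuousM; exact: coord_continuous.
  have S_closed : closed S.
    rewrite (_ : S = sq @^-1` [set y | y = 1]) //.
    by apply: preimage_closed; [move=> x _; exact: sq_cont | exact: closed_eq].
  apply: (subclosed_compact S_closed (rV_compact (fun=> @segment_compact R (-1) 1))).
  move=> x Sx i /=; rewrite in_itv /=.
  have : x ord0 i ^+ 2 <= 1.
    by rewrite -Sx /sq (bigD1 i) //= lerDl sumr_ge0 // => j _; exact: sqr_ge0.
  by move=> ?; apply/andP; split; nra.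
have quotient_cont :
    {within S, continuous (fun x => Q (r2v x) (r2v x) / P (r2v x) (r2v x))}.
  apply: continuous_in_subspaceT => x; rewrite inE => Sx.
  apply: (continuousM (s := fun x : 'rV[R]_(dim V) => Q (r2v x) (r2v x))
                      (t := fun x : 'rV[R]_(dim V) => (P (r2v x) (r2v x))^-1)).
    exact: quadratic_r2v_continuous.
  apply: continuousV; last exact: quadratic_r2v_continuous.
  by apply: lt0r_neq0; apply/P_pos/r2v_neq0/S_neq0.
have S_nonempty : S !=set0.
  exists ((Num.sqrt (sq (v2r w)))^-1 *: v2r w); apply: normalizeS.
  by apply: contra w_neq0 => /eqP w0; apply/eqP/v2r_inj; rewrite w0 linear0.
have [x0 Sx0 x0_max] := EVT_max_rV S_nonempty S_compact quotient_cont.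
have v0_neq0 : r2v x0 != 0 by apply/r2v_neq0/S_neq0; rewrite -inE.
exists (r2v x0) => // v; have [->|v_neq0] := eqVneq v 0.
  by rewrite (form0l hT hQ) // (form0l hT hP) // mul0r mulr0.
have x_neq0 : v2r v != 0 by apply: contra v_neq0 => /eqP v0; rewrite -[v]v2rK v0 linear0.
have := x0_max _ (mem_set (normalizeS _ x_neq0)).
rewrite linearZ /= v2rK (formZl hT hQ) // (formZr hT hQ) //.
rewrite (formZl hT hP) // (formZr hT hP) //.
set s := (Num.sqrt _)^-1; have s_neq0 : s != 0.
  by rewrite invr_eq0 lt0r_neq0 // sqrtr_gt0 sq_gt0.
rewrite !mulrA -[s * s * Q v v / _]mulf_div divff ?mulf_neq0 // mul1r.
by rewrite ler_pdivrMr ?P_pos // mulrAC ler_pdivlMr ?P_pos.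
Qed.

Lemma rayleigh_eigenvector : (exists w : V, w != 0) ->
  exists v0 s, [/\ v0 != 0, forall u, Q v0 u = s * P v0 u & forall v, Q v v <= s * P v v].
Proof.
move=> /rayleigh_max [v0 v0_neq0 v0_max]; have P0_gt0 := P_pos v0_neq0.
set s := Q v0 v0 / P v0 v0.
have Q0 : Q v0 v0 = s * P v0 v0 by rewrite /s divfK ?lt0r_neq0.
have s_max v : Q v v <= s * P v v by rewrite /s mulrAC ler_pdivlMr.
exists v0, s; split => // u; apply/eqP; rewrite -subr_eq0; apply/eqP.
suff : 2 * (Q v0 u - s * P v0 u) = 0 by lra.
apply: (@lin_coef_eq0_of_quadratic_le0 _ _ (Q u u - s * P u u)) => t.
have : Q (t *: u + v0) (t *: u + v0) - s * P (t *: u + v0) (t *: u + v0) <= 0.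
  by rewrite subr_le0.
apply: le_trans; rewrite le_eqVlt; apply/orP; left.
rewrite !(form_linl hQ) // !(form_linr hT hQ) //.
rewrite !(form_linl hP) // !(form_linr hT hP) //.
rewrite [Q u v0](form_sym hQ) // [P u v0](form_sym hP) // Q0; apply/eqP; ring.
Qed.

End Rayleigh.

Lemma sum_kronecker (R : pzSemiRingType) (k : nat) (a : 'I_k -> R) (j : 'I_k) :
  \sum_(i < k) a i * ((i : nat) == j)%:R = a j.
Proof.
rewrite (bigD1 j) //= eqxx mulr1 big1 ?addr0 // => i.
by rewrite val_eqE => /negbTE ->; rewrite mulr0.
Qed.

Section Spectral.
Variables (R : realType) (V : vectType R) (P A : V -> V -> R).
Hypotheses (hP : symmetric_bilinear_on setT P) (hA : symmetric_bilinear_on setT A).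
Hypothesis P_pos : forall v, v != 0 -> 0 < P v v.
Let hT := linear_subsetT V.

Definition orthonormal_eigenfamily k (e : nat -> V) (c : nat -> R) :=
  (forall i u, (i < k)%N -> A (e i) u = c i * P (e i) u) /\
  (forall i j, (i < k)%N -> (j < k)%N -> P (e i) (e j) = (i == j)%:R).

Section Family.
Variables (k : nat) (e : nat -> V) (c : nat -> R).
Hypothesis he : orthonormal_eigenfamily k e c.

Lemma orthonormal_coef (a : 'I_k -> R) (j : 'I_k) :
  P (\sum_(i < k) a i *: e i) (e j) = a j.
Proof.
rewrite (form_suml hT hP) //.
by under eq_bigr => i _ do rewrite (proj2 he) //; rewrite sum_kronecker.
Qed.

Lemma orthonormal_eigenfamily_size : (k <= dim V)%N.
Proof.
have : free [tuple e i | i < k].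
  apply/freeP => a sum0 j; have := congr1 (P^~ (e j)) sum0.
  under eq_bigr do rewrite nth_mktuple.
  by rewrite orthonormal_coef (form0l hT hP).
rewrite /free size_tuple => /eqP <-; rewrite -dimvf; apply: dimvS; exact: subvf.
Qed.

Lemma residual_orthogonal x (j : 'I_k) :
  P (x - \sum_(i < k) P x (e i) *: e i) (e j) = 0.
Proof. by rewrite (formBl hT hP) // orthonormal_coef subrr. Qed.

Lemma deflated_form_bilinear (K : R) :
  symmetric_bilinear_on setT
    (fun u v => A u v - \sum_(i < k) (c i - K) * (P u (e i) * P v (e i))).
Proof.
split=> [a x y z _ _ _ | x y _ _]; last first.
  rewrite (form_sym hA) //; congr (_ - _).
  by apply: eq_bigr => i _; rewrite [_ * P y _]mulrC.
rewrite (form_linl hA) //.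
under eq_bigr => i _ do rewrite (form_linl hP) //.
have -> : \sum_(i < k) (c i - K) * ((a * P x (e i) + P y (e i)) * P z (e i)) =
    a * \sum_(i < k) (c i - K) * (P x (e i) * P z (e i)) +
    \sum_(i < k) (c i - K) * (P y (e i) * P z (e i)).
  by rewrite mulr_sumr -big_split; apply: eq_bigr => i _ /=; ring.
ring.
Qed.

(* Lowering the eigenvalues of the e_i to K, below the Rayleigh quotient of the
   residual w0, forces the maximiser of the deflated quotient off their span. *)
Lemma exists_orthogonal_eigenvector :
  (exists w, w != \sum_(i < k) P w (e i) *: e i) ->
  exists v s, [/\ forall u, A v u = s * P v u, P v v = 1 &
                  forall j, (j < k)%N -> P v (e j) = 0].
Proof.
move=> [w w_res]; pose w0 := w - \sum_(i < k) P w (e i) *: e i.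
have w0_neq0 : w0 != 0 by rewrite subr_eq0.
have w0_orth (j : 'I_k) : P w0 (e j) = 0 by exact: residual_orthogonal.
have Pw0_gt0 := P_pos w0_neq0.
pose K := A w0 w0 / P w0 w0 - 1.
have [v0 [s [v0_neq0 v0_eig v0_max]]] :=
  rayleigh_eigenvector hP (deflated_form_bilinear K) P_pos (ex_intro _ w0 w0_neq0).
have K_lt_s : K < s.
  have := v0_max w0; rewrite big1 => [|i _]; last by rewrite w0_orth mul0r mulr0.
  by rewrite subr0 -ler_pdivrMr // /K; lra.
have v0_orth j : (j < k)%N -> P v0 (e j) = 0.
  move=> lt_jk; have := v0_eig (e j).
  under eq_bigr => i _ do rewrite [P (e j) _](proj2 he) // eq_sym mulrA.
  rewrite (sum_kronecker (fun i : 'I_k => (c i - K) * P v0 (e i)) (Ordinal lt_jk)) /=.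
  rewrite (form_sym hA) // (proj1 he) // (form_sym hP) // => eq_j.
  have : (s - K) * P v0 (e j) = 0 by rewrite mulrBl -eq_j; ring.
  by move/eqP; rewrite mulf_eq0 subr_eq0 gt_eqF //= => /eqP.
have v0_eigA u : A v0 u = s * P v0 u.
  by rewrite -v0_eig big1 ?subr0 // => i _; rewrite v0_orth // mul0r mulr0.
have Pv0_gt0 := P_pos v0_neq0.
set r := (Num.sqrt (P v0 v0))^-1.
exists (r *: v0), s; split.
- by move=> u; rewrite (formZl hT hA) // (formZl hT hP) // v0_eigA mulrCA.
- rewrite (formZl hT hP) // (formZr hT hP) // mulrA -expr2 /r exprVn.
  by rewrite sqr_sqrtr ?mulVf ?lt0r_neq0 ?ltW.
- by move=> j lt_jk; rewrite (formZl hT hP) // v0_orth // mulr0.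
Qed.

Lemma orthonormal_eigenfamily_cons v s :
  (forall u, A v u = s * P v u) -> P v v = 1 ->
  (forall j, (j < k)%N -> P v (e j) = 0) ->
  orthonormal_eigenfamily k.+1 (fun i => if i == k then v else e i)
                              (fun i => if i == k then s else c i).
Proof.
move=> v_eig v_unit v_orth.
have lt_k i : (i < k.+1)%N -> i != k -> (i < k)%N.
  by move=> lt_ik ne_ik; rewrite ltn_neqAle ne_ik -ltnS.
split=> [i u lt_ik | i j lt_ik lt_jk].
  by case: eqVneq => [// | ne_ik]; apply: (proj1 he); exact: lt_k.
rewrite /=; case: (eqVneq i k) => [ei | ne_ik]; case: (eqVneq j k) => [ej | ne_jk].
- by rewrite ei ej eqxx.
- by rewrite ei v_orth ?lt_k // eq_sym (negbTE ne_jk).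
- by rewrite ej (form_sym hP) // v_orth ?lt_k // (negbTE ne_ik).
- by apply: (proj2 he); exact: lt_k.
Qed.

End Family.

Theorem spectral_theorem : exists k e c,
  orthonormal_eigenfamily k e c /\ forall x, x = \sum_(i < k) P x (e i) *: e i.
Proof.
suff grow : forall n, exists k e c, orthonormal_eigenfamily k e c /\
    ((forall x, x = \sum_(i < k) P x (e i) *: e i) \/ (n <= k)%N).
  have [k [e [c [he [span | big]]]]] := grow (dim V).+1; first by exists k, e, c.
  by have := orthonormal_eigenfamily_size he; rewrite leqNgt big.
elim=> [|n [k [e [c [he [span | le_nk]]]]]].
- by exists 0%N, (fun=> 0), (fun=> 0); split; [split | right].
- by exists k, e, c; split => //; left.
- have [span | /existsNP [w /eqP w_res]] :=
    pselect (forall x, x = \sum_(i < k) P x (e i) *: e i).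
    by exists k, e, c; split => //; left.
  have [v [s [v_eig v_unit v_orth]]] :=
    exists_orthogonal_eigenvector he (ex_intro _ w w_res).
  exists k.+1, (fun i => if i == k then v else e i), (fun i => if i == k then s else c i).
  by split; [exact: orthonormal_eigenfamily_cons | right].
Qed.

End Spectral.

(* Also true when a denominator vanishes, since then [t = 0] and [t ^+ 2 / 0 = 0]. *)
Lemma mul_eq_sqr_div (R : fieldType) (ci cj cl u v t : R) : ci != cj ->
  (cj - cl) * u = t -> (ci - cl) * v = t -> u * v = t ^+ 2 / ((ci - cl) * (cj - cl)).
Proof.
move=> ne_ij hu hv; have [e_lj | ne_lj] := eqVneq cl cj.
  have t0 : t = 0 by rewrite -hu e_lj subrr mul0r.
  move: hv; rewrite t0 e_lj => /eqP; rewrite mulf_eq0 subr_eq0 (negbTE ne_ij) /= => /eqP ->.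
  by rewrite mulr0 expr0n mul0r.
have [e_li | ne_li] := eqVneq cl ci.
  have t0 : t = 0 by rewrite -hv e_li subrr mul0r.
  move: hu; rewrite t0 e_li => /eqP; rewrite mulf_eq0 subr_eq0 eq_sym (negbTE ne_ij) /=.
  by move=> /eqP ->; rewrite mul0r expr0n mul0r.
have -> : t ^+ 2 = ((cj - cl) * u) * ((ci - cl) * v) by rewrite hu hv expr2.
by field; rewrite !subr_eq0 ![_ == cl]eq_sym ne_lj ne_li.
Qed.

Lemma sum_sqr_div_gt0 (R : realFieldType) (I : finType) (t d : I -> R) (i0 : I) :
  t i0 != 0 -> (forall i, t i != 0 -> 0 < d i) -> 0 < \sum_i t i ^+ 2 / d i.
Proof.
move=> t0_neq0 d_gt0; have term_gt0 i : t i != 0 -> 0 < t i ^+ 2 / d i.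
  by move=> ti_neq0; rewrite divr_gt0 ?exprn_even_gt0 ?d_gt0.
rewrite (bigD1 i0) //= ltr_pwDl ?term_gt0 // sumr_ge0 // => i _.
by have [->|/term_gt0/ltW //] := eqVneq (t i) 0; rewrite expr0n mul0r.
Qed.

(** * Reductive homogeneous spaces *)

Section ReductiveSpace.
Variables (R : realType) (g : vectType R)
  (br : g -> g -> g) (ph : g -> g) (ip : g -> g -> R)
  (alpha : g -> g -> g) (A : g -> g -> R).
Hypotheses (Hbr : lie_bracket br) (Hph : reductive_decomposition br ph)
  (Hip : invariant_inner_product br ph ip) (Hal : levi_civita_product br ph ip alpha)
  (HA : invariant_codazzi br ph alpha A).

Local Notation m := (in_m ph).
Local Notation mpart := (mpart ph).
Local Notation T := (nablaA alpha A).

Lemma ph_linear a x y : ph (a *: x + y) = a *: ph x + ph y.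
Proof. by case: Hph. Qed.

Lemma ph0 : ph 0 = 0.
Proof.
have := ph_linear 1 0 0; rewrite !scale1r addr0 => h.
by apply: (addrI (ph 0)); rewrite -h addr0.
Qed.

Lemma phZ a x : ph (a *: x) = a *: ph x.
Proof. by rewrite -[a *: x]addr0 ph_linear ph0 addr0. Qed.

Lemma phB x y : ph (x - y) = ph x - ph y.
Proof. by rewrite -scaleN1r addrC ph_linear scaleN1r addrC. Qed.

Lemma m_linear : linear_subset m.
Proof. by split=> [|a x y mx my]; rewrite /in_m ?ph0 // ph_linear mx my scaler0 addr0. Qed.

Lemma mpart_in_m x : m (mpart x).
Proof. by case: Hph => _ ph_idem _ _; rewrite /in_m /Defs.mpart phB ph_idem subrr. Qed.

Lemma mpart_id x : m x -> mpart x = x.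
Proof. by rewrite /Defs.mpart => ->; rewrite subr0. Qed.

Lemma mpart_linear a x y : mpart (a *: x + y) = a *: mpart x + mpart y.
Proof. by rewrite /Defs.mpart ph_linear scalerBr opprD addrACA. Qed.

Lemma mpartN x : mpart (- x) = - mpart x.
Proof. by rewrite /Defs.mpart -scaleN1r phZ !scaleN1r opprK opprB addrC. Qed.

Lemma mpart_sum (I : Type) (r : seq I) (a : I -> R) (v : I -> g) :
  mpart (\sum_(i <- r) a i *: v i) = \sum_(i <- r) a i *: mpart (v i).
Proof.
elim: r => [|i r IH]; first by rewrite !big_nil /Defs.mpart ph0 subr0.
by rewrite !big_cons mpart_linear IH.
Qed.

Lemma bracket_anti x y : mpart (br y x) = - mpart (br x y).
Proof.
case: Hbr => linl linr alt _.
have brD u v w : br (u + v) w = br u w + br v w by have := linl 1 u v w; rewrite !scale1r.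
have brDr u v w : br w (u + v) = br w u + br w v by have := linr 1 u v w; rewrite !scale1r.
have := alt (x + y); rewrite brD !brDr !alt add0r addr0 => /eqP.
rewrite addr_eq0 => /eqP ->.
by rewrite mpartN opprK.
Qed.

Lemma symmetric_bilinear_on_m B :
  bilinear_on_m ph B -> symmetric_on_m ph B -> symmetric_bilinear_on m B.
Proof.
by move=> lin sym; split=> [a x y z mx my mz|]; [case: (lin a x y z mx my mz) | ].
Qed.

Let hm := m_linear.
Let hip : symmetric_bilinear_on m ip.
Proof. by case: Hip => ? ? _ _; exact: symmetric_bilinear_on_m. Qed.
Let hA : symmetric_bilinear_on m A.
Proof. by case: HA => ? ? _ _; exact: symmetric_bilinear_on_m. Qed.

Lemma ip_pos x : m x -> x != 0 -> 0 < ip x x.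
Proof. by case: Hip => _ _ pos _; exact: pos. Qed.

Lemma alpha_in_m X Y : m X -> m Y -> m (alpha X Y).
Proof. by case: Hal => H _; exact: H. Qed.

Lemma codazzi X Y Z : m X -> m Y -> m Z -> T X Y Z = T Y X Z.
Proof. by case: HA => _ _ _; apply. Qed.

Lemma ip_nondegenerate d : m d -> (forall Z, m Z -> ip d Z = 0) -> d = 0.
Proof.
move=> md d_orth; apply/eqP; apply: contraT => d_neq0.
by have := ip_pos md d_neq0; rewrite d_orth ?ltxx.
Qed.

Lemma levi_civita X Y Z : m X -> m Y -> m Z ->
  2 * ip (alpha X Y) Z =
    ip (mpart (br X Y)) Z - ip X (mpart (br Y Z)) - ip (mpart (br X Z)) Y.
Proof. by case: Hal => _; apply. Qed.

Let m_add x y : m x -> m y -> m (x + y).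
Proof. by move=> mx my; apply: (linear_subsetD hm mx my). Qed.
Let m_scale a x : m x -> m (a *: x).
Proof. by move=> mx; apply: (linear_subsetZ hm a mx). Qed.
Let m_sub x y : m x -> m y -> m (x - y).
Proof. by move=> mx my; apply: (linear_subsetB hm mx my). Qed.
Hint Resolve mpart_in_m alpha_in_m m_add m_scale m_sub : core.

Lemma alpha_skew X Y Z : m X -> m Y -> m Z ->
  ip (alpha X Y) Z = - ip (alpha X Z) Y.
Proof.
move=> mX mY mZ; have := levi_civita mX mY mZ; have := levi_civita mX mZ mY.
rewrite [mpart (br Z Y)]bracket_anti (formNr hm hip) //; lra.
Qed.

Lemma alpha_torsion X Y : m X -> m Y -> alpha X Y - alpha Y X = mpart (br X Y).
Proof.
move=> mX mY; apply/eqP; rewrite -subr_eq0; apply/eqP.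
apply: ip_nondegenerate => [|Z mZ]; first by auto.
rewrite [ip (_ - mpart _) Z](formBl hm hip) ?[ip (alpha X Y - _) Z](formBl hm hip); auto.
have := levi_civita mX mY mZ; have := levi_civita mY mX mZ.
rewrite [mpart (br Y X)]bracket_anti (formNl hm hip) // [ip Y _](form_sym hip) //.
rewrite [ip (mpart (br Y Z)) X](form_sym hip) //; lra.
Qed.

Lemma alpha_linr X a Y Y' : m X -> m Y -> m Y' ->
  alpha X (a *: Y + Y') = a *: alpha X Y + alpha X Y'.
Proof.
move=> mX mY mY'; apply/eqP; rewrite -subr_eq0; apply/eqP.
apply: ip_nondegenerate => [|Z mZ]; first by auto.
have skew W : m W -> ip (alpha X W) Z = - ip (alpha X Z) W by move=> mW; apply: alpha_skew.
rewrite (formBl hm hip); auto; rewrite (form_linl hip); auto.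
rewrite (skew (a *: Y + Y')) ?(form_linr hm hip) ?skew; auto.
ring.
Qed.

Lemma nablaA_sym23 X Y Z : m X -> m Y -> m Z -> T X Y Z = T X Z Y.
Proof.
move=> mX mY mZ; rewrite /nablaA (form_sym hA (alpha_in_m mX mY) mZ).
by rewrite (form_sym hA mY (alpha_in_m mX mZ)) addrC.
Qed.

Lemma nablaA_bilinear X : m X -> symmetric_bilinear_on m (T X).
Proof.
move=> mX; split=> [a Y Y' Z mY mY' mZ | Y Z mY mZ]; last exact: nablaA_sym23.
rewrite /nablaA alpha_linr // (form_linl hA a (alpha_in_m mX mY) (alpha_in_m mX mY') mZ).
by rewrite (form_linl hA a mY mY' (alpha_in_m mX mZ)); ring.
Qed.

Lemma nablaA_cycle X Y Z : m X -> m Y -> m Z -> T X Y Z = T Y Z X.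
Proof. by move=> mX mY mZ; rewrite codazzi // nablaA_sym23. Qed.

Definition eigen (l : R) (X : g) := m X /\ forall W, m W -> A X W = l * ip X W.

Lemma nablaA_eigen_r l X Y W : m X -> eigen l Y -> m W ->
  T X Y W = l * ip (alpha X Y) W - A (alpha X Y) W.
Proof.
move=> mX [mY eY] mW; have mXW := alpha_in_m mX mW.
rewrite /nablaA (eY _ mXW) (form_sym hip mY mXW) (alpha_skew mX mW mY); ring.
Qed.

Lemma nablaA_eigen l n X Y W : m X -> eigen l Y -> eigen n W ->
  T X Y W = (l - n) * ip (alpha X Y) W.
Proof.
move=> mX eY [mW eW]; have [mY _] := eY; have mXY := alpha_in_m mX mY.
rewrite (nablaA_eigen_r mX eY mW) (form_sym hA mXY mW) (eW _ mXY).
by rewrite (form_sym hip mW mXY); ring.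
Qed.

Lemma nablaA_eigen_same l X Y W : eigen l X -> eigen l Y -> m W -> T X Y W = 0.
Proof.
move=> eX eY mW; have [mX _] := eX; have [mY _] := eY.
by rewrite nablaA_sym23 // codazzi // (nablaA_eigen mW eX eY) subrr mul0r.
Qed.

Lemma eigen_alpha_self l X : eigen l X -> eigen l (alpha X X).
Proof.
move=> eX; have [mX _] := eX; split=> [|W mW]; first exact: alpha_in_m.
have := nablaA_eigen_same eX eX mW; rewrite (nablaA_eigen_r mX eX mW).
by move/eqP; rewrite subr_eq0 => /eqP.
Qed.

Lemma eigen_orth l n X Y : eigen l X -> eigen n Y -> l != n -> ip X Y = 0.
Proof.
move=> [mX eX] [mY eY] ne_ln.
have : (l - n) * ip X Y = 0.
  by rewrite mulrBl -eX // (form_sym hA) // eY // (form_sym hip) // subrr.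
by move/eqP; rewrite mulf_eq0 subr_eq0 (negbTE ne_ln) => /eqP.
Qed.

Lemma ip_alpha_bracket_eigen l n X Y : eigen l X -> eigen n Y -> l != n ->
  ip (alpha (mpart (br X Y)) X) Y = ip (alpha X Y) (alpha Y X).
Proof.
move=> eX eY ne_ln; have [mX _] := eX; have [mY _] := eY.
set U := alpha X Y; set V := alpha Y X; set D := mpart (br X Y).
have mU : m U := alpha_in_m mX mY; have mV : m V := alpha_in_m mY mX.
have mD : m D := mpart_in_m _.
have TD : T D X Y = (l - n) * ip (alpha D X) Y := nablaA_eigen mD eX eY.
have DE : D = U - V by rewrite /D -alpha_torsion.
rewrite codazzi // nablaA_sym23 // {1}DE (formBr hm (nablaA_bilinear mX)) // in TD.
rewrite codazzi // (nablaA_eigen_r mY eX) // (nablaA_eigen_r mX eY) // in TD.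
rewrite (form_sym hA mV mU) (form_sym hip mV mU) in TD.
have : (l - n) * (ip (alpha D X) Y - ip U V) = 0 by rewrite mulrBr -TD; ring.
by move/eqP; rewrite mulf_eq0 subr_eq0 (negbTE ne_ln) subr_eq0 => /eqP.
Qed.

Lemma Kd_eigen l n X Y : eigen l X -> eigen n Y -> l != n ->
  Kd br ph ip alpha X Y = 2 * ip (alpha X Y) (alpha Y X).
Proof.
move=> eX eY ne_ln; have [mX _] := eX; have [mY _] := eY.
rewrite /Kd /Rd !(formBl hm hip); auto.
rewrite (alpha_skew mX (alpha_in_m mY mY) mX) (alpha_skew mY (alpha_in_m mX mY) mX).
rewrite (alpha_skew (mpart_in_m _) mY mX) (ip_alpha_bracket_eigen eX eY ne_ln).
rewrite (eigen_orth (eigen_alpha_self eX) (eigen_alpha_self eY) ne_ln).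
by rewrite (form_sym hip (alpha_in_m mY mX) (alpha_in_m mX mY)); ring.
Qed.

Lemma mspace_spec :
  exists M : {vspace g}, forall x, x \in M <-> m x.
Proof.
pose X := map_tuple mpart (vbasis fullv); exists <<X>>%VS => x; split.
  move/coord_span ->; apply: linear_subset_sum => // i.
  by rewrite -tnth_nth tnth_map.
move=> mx; rewrite -(mpart_id mx) (coord_vbasis (memvf x)) mpart_sum.
apply: memv_suml => i _; apply/memvZ/memv_span.
by rewrite -tnth_nth -tnth_map mem_tnth.
Qed.

Lemma m_eigenbasis : exists k (e : 'I_k -> g) (c : 'I_k -> R),
  [/\ forall i, eigen (c i) (e i), forall i j, ip (e i) (e j) = (i == j)%:R &
      forall x, m x -> x = \sum_i ip x (e i) *: e i].
Proof.
have [M memM] := mspace_spec.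
have mW (u : subvs_of M) : m (vsval u) by apply/memM/subvsP.
have restrict B : symmetric_bilinear_on m B ->
    symmetric_bilinear_on setT (fun u v : subvs_of M => B (vsval u) (vsval v)).
  move=> hB; split=> [a x y z _ _ _ | x y _ _]; last exact: (form_sym hB).
  by rewrite linearP /= (form_linl hB).
have ipW_pos (u : subvs_of M) : u != 0 -> 0 < ip (vsval u) (vsval u).
  by move=> u_neq0; apply: ip_pos => //; rewrite -(linear0 vsval) (inj_eq subvs_inj).
have [k [e [c [[e_eig e_on] e_span]]]] :=
  spectral_theorem (restrict _ hip) (restrict _ hA) ipW_pos.
exists k, (fun i : 'I_k => vsval (e i)), (fun i : 'I_k => c i); split.
- move=> i; split=> // w mw.
  by have := e_eig i (vsproj M w) (ltn_ord i); rewrite /= vsprojK //; apply/memM.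
- by move=> i j; apply: e_on.
- move=> x mx; have Mx : x \in M by apply/memM.
  by have := congr1 vsval (e_span (vsproj M x)); rewrite vsprojK // linear_sum.
Qed.

Section Eigenbasis.
Variables (k : nat) (e : 'I_k -> g) (c : 'I_k -> R).
Hypotheses (e_eigen : forall i, eigen (c i) (e i))
  (e_orthonormal : forall i j, ip (e i) (e j) = (i == j)%:R)
  (e_span : forall x, m x -> x = \sum_i ip x (e i) *: e i).

Let e_m i : m (e i). Proof. by case: (e_eigen i). Qed.
Hint Resolve e_m : core.

Local Notation tau i j l := (T (e i) (e j) (e l)).

Lemma parseval x y : m x -> m y -> ip x y = \sum_l ip x (e l) * ip y (e l).
Proof.
move=> mx my; rewrite {1}(e_span my) (form_sumr hm hip) //.
by apply: eq_bigr => l _; rewrite mulrC.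
Qed.

Lemma nablaA_basis_neq0 X Y Z : m X -> m Y -> m Z ->
  T X Y Z != 0 -> exists l, T X Y (e l) != 0.
Proof.
move=> mX mY mZ; rewrite (e_span mZ) (form_sumr hm (nablaA_bilinear mX)) // => nz.
apply/existsP; apply: contraNT nz => /existsPn T0.
by rewrite big1 // => l _; rewrite (eqP (negbNE (T0 l))) mulr0.
Qed.

Lemma exists_tau_neq0 : nablaA_nonzero ph alpha A -> exists i j l, tau i j l != 0.
Proof.
move=> [X [Y [Z [mX mY mZ nz]]]].
have [l nz_l] := nablaA_basis_neq0 mX mY mZ nz.
rewrite nablaA_cycle // in nz_l; have [i nz_i] := nablaA_basis_neq0 mY (e_m l) mX nz_l.
rewrite nablaA_cycle // in nz_i; have [j nz_j] := nablaA_basis_neq0 (e_m l) (e_m i) mY nz_i.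
by exists l, i, j.
Qed.

Lemma tau_sym12 i j l : tau i j l = tau j i l. Proof. exact: codazzi. Qed.
Lemma tau_sym23 i j l : tau i j l = tau i l j. Proof. exact: nablaA_sym23. Qed.

Lemma tau_eigen i j l : tau i j l = (c j - c l) * ip (alpha (e i) (e j)) (e l).
Proof. exact: nablaA_eigen. Qed.

Lemma tau_neq0_eigenvalues i j l : tau i j l != 0 -> c i != c j.
Proof.
apply: contra => /eqP c_ij; apply/eqP; apply: (nablaA_eigen_same (e_eigen i)) => //.
by rewrite c_ij.
Qed.

Lemma Kd_basis i j : c i != c j ->
  Kd br ph ip alpha (e i) (e j) = 2 * \sum_l tau i j l ^+ 2 / ((c i - c l) * (c j - c l)).
Proof.
move=> c_ij; rewrite (Kd_eigen (e_eigen i) (e_eigen j) c_ij) parseval; auto.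
congr (_ * _); apply: eq_bigr => l _; apply: mul_eq_sqr_div c_ij _ _.
  by rewrite tau_eigen.
by rewrite tau_sym12 tau_eigen.
Qed.

Lemma orthonormal_pair_basis i j : c i != c j -> orthonormal_pair ph ip (e i) (e j).
Proof.
move=> c_ij; have ne_ij : (i == j) = false by apply: contraNF c_ij => /eqP ->.
by split; rewrite ?e_orthonormal ?eqxx ?ne_ij.
Qed.

Lemma Kd_basis_gt0 i j l0 : tau i j l0 != 0 ->
  (forall l, tau i j l != 0 -> c i < c l /\ c j < c l) ->
  0 < Kd br ph ip alpha (e i) (e j).
Proof.
move=> nz0 above; rewrite Kd_basis ?(tau_neq0_eigenvalues nz0) // pmulr_rgt0 //.
apply: sum_sqr_div_gt0 nz0 _ => l /above [lt_il lt_jl].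
by rewrite nmulr_rgt0 ?subr_lt0.
Qed.

Lemma Kd_basis_lt0 i j l0 : tau i j l0 != 0 ->
  (forall l, tau i j l != 0 -> c i < c l /\ c l < c j) ->
  Kd br ph ip alpha (e i) (e j) < 0.
Proof.
move=> nz0 between; rewrite Kd_basis ?(tau_neq0_eigenvalues nz0) //.
rewrite pmulr_rlt0 // -oppr_gt0 -sumrN; under eq_bigr do rewrite -mulrN -invrN -mulNr.
apply: sum_sqr_div_gt0 nz0 _ => l /between [lt_il lt_lj].
by rewrite mulNr oppr_gt0 nmulr_rlt0 ?subr_lt0 ?subr_gt0.
Qed.

Lemma Kd_both_signs : nablaA_nonzero ph alpha A ->
  (exists X Y, orthonormal_pair ph ip X Y /\ 0 < Kd br ph ip alpha X Y) /\
  (exists X Y, orthonormal_pair ph ip X Y /\ Kd br ph ip alpha X Y < 0).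
Proof.
move=> /exists_tau_neq0 [i0 [j0 [l0 nz0]]].
pose I := [pred i | [exists j, exists l, tau i j l != 0]].
have Ii0 : I i0 by apply/existsP; exists j0; apply/existsP; exists l0.
have [i /existsP [j1 /existsP [l1 nz1]] i_min] := arg_minP c Ii0.
pose J := [pred j | [exists l, tau i j l != 0]].
have Jj1 : J j1 by apply/existsP; exists l1.
have in_J j l : tau i j l != 0 -> J l.
  by move=> nz; apply/existsP; exists j; rewrite tau_sym23.
have ci_lt j l : tau i j l != 0 -> c i < c l.
  move=> nz; have nz' : tau i l j != 0 by rewrite tau_sym23.
  rewrite lt_neqAle (tau_neq0_eigenvalues nz') /=.
  by apply: i_min; apply/existsP; exists i; apply/existsP; exists j; rewrite tau_sym12.
have cj_neq j l : tau i j l != 0 -> c j != c l.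
  by move=> nz; apply: (tau_neq0_eigenvalues (l := i)); rewrite tau_sym23 tau_sym12.
split.
- have [j /existsP [l2 nz2] j_min] := arg_minP c Jj1.
  exists (e i), (e j); split; first exact/orthonormal_pair_basis/(tau_neq0_eigenvalues nz2).
  apply: (Kd_basis_gt0 nz2) => l nz; split; first exact: ci_lt nz.
  by rewrite lt_neqAle cj_neq //; exact: j_min (in_J _ _ nz).
- have [j /existsP [l2 nz2] j_max] := arg_maxP c Jj1.
  exists (e i), (e j); split; first exact/orthonormal_pair_basis/(tau_neq0_eigenvalues nz2).
  apply: (Kd_basis_lt0 nz2) => l nz; split; first exact: ci_lt nz.
  by rewrite lt_neqAle eq_sym cj_neq //; exact: j_max (in_J _ _ nz).
Qed.

End Eigenbasis.
End ReductiveSpace.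

Theorem proposition3p1 (R : realType) (g : vectType R)
  (br : g -> g -> g) (ph : g -> g) (ip : g -> g -> R)
  (alpha : g -> g -> g) (A : g -> g -> R) :
  lie_bracket br ->
  reductive_decomposition br ph ->
  invariant_inner_product br ph ip ->
  levi_civita_product br ph ip alpha ->
  invariant_codazzi br ph alpha A ->
  nablaA_nonzero ph alpha A ->
  (exists X Y, orthonormal_pair ph ip X Y /\ 0 < Kd br ph ip alpha X Y) /\
  (exists X Y, orthonormal_pair ph ip X Y /\ Kd br ph ip alpha X Y < 0).
Proof.
move=> Hbr Hph Hip Hal HA nablaA_neq0.
have [k [e [c [e_eigen e_orthonormal e_span]]]] := m_eigenbasis Hph Hip HA.
exact: (Kd_both_signs Hbr Hph Hip Hal HA e_eigen e_orthonormal e_span nablaA_neq0).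
Qed.
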